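(* Let $$\mathcal{X} = \left\{(A, B) \in M_4(\mathbb{C}) \times M_4(\mathbb{C}) : \operatorname{Tr} A = \operatorname{Tr} B = 0,\ \|A\|_F^2 + \|B\|_F^2 = \tfrac{1}{4}\right\},$$ and let $\mathcal{Y} \subseteq \mathcal{X}$ be the set of those $(A,B) \in \mathcal{X}$ such that $A$ has four pairwise distinct eigenvalues and $B$ has four pairwise distinct eigenvalues. For $(A,B)$ put $X = A \otimes I_4 + I_4 \otimes B \in M_{16}(\mathbb{C})$ and $\phi(A,B) = \sigma_1(X)^2 + \sigma_2(X)^2$, where $\sigma_1(X)\ge\sigma_2(X)$ are the two largest singular values of $X$. Then $\phi(A,B) \leq \frac{1}{2}$ for all $(A,B) \in \mathcal{X}$ if and only if $\phi(A,B) \leq \frac12$ for all $(A,B) \in \mathcal{Y}$.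
   Context: $\|\cdot\|_F$ denotes the Frobenius norm, $\|A\|_F = (\operatorname{Tr}(A^*A))^{1/2}$. $\otimes$ denotes the Kronecker product. *)

From HB Require Import structures.
From mathcomp Require Import all_boot all_order all_algebra.
From mathcomp Require Import reals complex mxtens.
Set Implicit Arguments. Unset Strict Implicit. Unset Printing Implicit Defensive.
Import Order.TTheory GRing.Theory Num.Theory.
Local Open Scope ring_scope.

Definition toC (R : realType) (x : R) : R[i] := Complex x 0.

Definition adjmx (R : realType) m n (A : 'M[R[i]]_(m, n)) : 'M[R[i]]_(n, m) :=
  (map_mx (fun z => z^*) A)^T.

Definition frob2 (R : realType) n (A : 'M[R[i]]_n) : R[i] := \tr (adjmx A *m A).

(* s is the list of singular values of X : the n nonnegative reals, sorted
   nonincreasingly, whose squares are the eigenvalues (with multiplicity,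
   i.e. the roots of the characteristic polynomial) of X^* X. *)
Definition singular_values (R : realType) n (X : 'M[R[i]]_n) (s : seq R) : Prop :=
  [/\ size s = n, sorted >=%R s, all (fun x => 0 <= x) s &
      char_poly (adjmx X *m X) = \prod_(x <- s) ('X - (toC (x ^+ 2))%:P)].

Definition Xmat (R : realType) (A B : 'M[R[i]]_4) : 'M[R[i]]_(4 * 4) :=
  A *t (1%:M : 'M[R[i]]_4) + (1%:M : 'M[R[i]]_4) *t B.

Definition phi_le (R : realType) (A B : 'M[R[i]]_4) (c : R) : Prop :=
  forall s, singular_values (Xmat A B) s -> s`_0 ^+ 2 + s`_1 ^+ 2 <= c.

Definition inX (R : realType) (A B : 'M[R[i]]_4) : Prop :=
  \tr A = 0 /\ \tr B = 0 /\ frob2 A + frob2 B = 1 / 4.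

Definition distinct_eigs4 (R : realType) (A : 'M[R[i]]_4) : Prop :=
  exists e : 'I_4 -> R[i], injective e /\ forall k, eigenvalue A (e k).

Definition inY (R : realType) (A B : 'M[R[i]]_4) : Prop :=
  inX A B /\ distinct_eigs4 A /\ distinct_eigs4 B.

From HB Require Import structures.
From mathcomp Require Import all_boot all_order all_algebra perm.
From mathcomp Require Import reals complex mxtens sesquilinear spectral.
From mathcomp Require Import ring.
Import Order.TTheory GRing.Theory Num.Theory.
Set Implicit Arguments. Unset Strict Implicit. Unset Printing Implicit Defensive.
Local Open Scope ring_scope.
Local Open Scope sesquilinear_scope.

(* By Ky Fan's maximum principle, sigma_1(X)^2 + sigma_2(X)^2 is the maximum of
   ||X W^*||_F^2 over the 2 x 16 matrices W with orthonormal rows, attained at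
   two top eigenvectors of X^* X.  So for (A, B) in X, phi(A, B) <= 1/2 iff the
   gap 2 (||A||_F^2 + ||B||_F^2) - ||X(A, B) W^*||_F^2 is nonnegative for every
   such W.  Both terms are homogeneous of degree 2, hence the hypothesis on Y
   makes the gap nonnegative at every traceless pair with simple spectra.  Given
   (A, B) in X, triangularize A and B (Schur) and add e times a traceless
   diagonal with distinct entries: for small e > 0 the spectra become simple,
   and along this path the gap is a real quadratic polynomial in e that is
   nonnegative on (0, delta), so its constant term, the gap at (A, B), is
   nonnegative. *)

Lemma exists_pos_lt (F : numFieldType) (s : seq F) :
  {in s, forall x, 0 < x} -> exists2 e, 0 < e & {in s, forall x, e < x}.
Proof.
elim: s => [_|x s IHs s_gt0]; first by exists 1.
have [e e_gt0 lt_e] : exists2 e, 0 < e & {in s, forall y, e < y}.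
  by apply: IHs => y ys; apply: s_gt0; rewrite inE ys orbT.
have x_gt0 := s_gt0 x (mem_head x s); have ex_gt0 : 0 < e + x by rewrite addr_gt0.
have lt_ex : e * x / (e + x) < e by rewrite ltr_pdivrMr // mulrDr ltrDr mulr_gt0.
exists (e * x / (e + x)); first by rewrite divr_gt0 ?mulr_gt0.
move=> y; rewrite inE => /predU1P [->|ys]; last exact: lt_trans lt_ex (lt_e y ys).
by rewrite ltr_pdivrMr // mulrDr [x * e]mulrC ltrDl mulr_gt0.
Qed.

Lemma quadratic_ge0_near0 (F : numFieldType) (a b c delta : F) :
  a \is Num.real -> b \is Num.real -> c \is Num.real -> 0 < delta ->
  (forall e, 0 < e < delta -> 0 <= a + e * b + e ^+ 2 * c) -> 0 <= a.
Proof.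
move=> a_real b_real c_real delta_gt0 q_ge0.
rewrite real_leNgt ?real0 //; apply/negP => a_lt0.
pose K := 1 + `|b| + `|c|; have K_gt0 : 0 < K by rewrite /K -addrA ltr_pwDl ?ltr01 ?addr_ge0.
have [e e_gt0 lt_e] : exists2 e, 0 < e & {in [:: delta; 1; - a / K], forall x, e < x}.
  apply: exists_pos_lt => x; rewrite !inE => /or3P [] /eqP ->;
  by rewrite ?ltr01 ?divr_gt0 ?oppr_gt0.
have e_delta : e < delta by apply: lt_e; rewrite !inE eqxx.
have e_le1 : e <= 1 by apply/ltW/lt_e; rewrite !inE eqxx orbT.
have eK : e * K < - a by rewrite -ltr_pdivlMr // lt_e // !inE eqxx !orbT.
have eb : e * b <= e * `|b| by apply: ler_wpM2l; [exact: ltW | exact: real_ler_norm].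
have ec : e ^+ 2 * c <= e * `|c|.
  rewrite (le_trans (ler_wpM2l (exprn_ge0 2 (ltW e_gt0)) (real_ler_norm c_real))) //.
  by rewrite expr2 -mulrA; apply: (ler_wpM2l (ltW e_gt0)); rewrite ler_piMl.
have q_lt0 : a + e * b + e ^+ 2 * c < 0.
  apply: le_lt_trans (lerD (lerD (lexx a) eb) ec) _.
  have -> : a + e * `|b| + e * `|c| = a + e * K - e by rewrite /K; ring.
  by rewrite ltr_wnDr ?oppr_le0 ?(ltW e_gt0) // -(subrr a) ltrD2l.
have := q_ge0 e; rewrite e_gt0 e_delta => /(_ isT) /(lt_le_trans q_lt0).
by rewrite ltxx.
Qed.

Lemma injective_perturb (F : numFieldType) n (t c : 'I_n -> F) : injective c ->
  exists2 delta, 0 < delta &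
    forall e, 0 < e < delta -> injective (fun k => t k + e * c k).
Proof.
move=> c_inj; pose gap jk := `|t jk.1 - t jk.2| / (1 + `|c jk.1 - c jk.2|).
pose gaps := [seq gap jk | jk <- enum predT & t jk.1 != t jk.2].
have [delta delta_gt0 lt_delta] : exists2 delta, 0 < delta & {in gaps, forall x, delta < x}.
  apply: exists_pos_lt => x /mapP [[j k]]; rewrite mem_filter => /andP [/= tjk _] ->.
  by rewrite divr_gt0 ?normr_gt0 ?subr_eq0 // ltr_pwDl.
exists delta => // e /andP [e_gt0 e_delta] j k /= tc_jk.
have [tjk|tjk] := eqVneq (t j) (t k).
  by move: tc_jk; rewrite tjk => /addrI /(mulfI (lt0r_neq0 e_gt0)) /c_inj.
have dt : `|t j - t k| = e * `|c j - c k|.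
  rewrite -[t j](addrK (e * c j)) tc_jk.
  have -> : t k + e * c k - e * c j - t k = e * (c k - c j) by ring.
  by rewrite normrM gtr0_norm // distrC.
have : delta < gap (j, k) by apply/lt_delta/map_f; rewrite mem_filter tjk mem_enum.
rewrite /gap /= ltr_pdivlMr ?ltr_pwDl // dt => lt_gap.
have : e * (1 + `|c j - c k|) < delta * (1 + `|c j - c k|) by rewrite ltr_pM2r ?ltr_pwDl.
by move=> /lt_trans/(_ lt_gap); rewrite ltr_pM2l // gtrDr ltr10.
Qed.

Lemma sum_mul_le_top2 (F : numDomainType) n (a w : 'I_n -> F) k0 k1 :
  (forall k, a k <= a k0) -> (forall k, k != k0 -> a k <= a k1) ->
  (forall k, 0 <= w k <= 1) -> \sum_k w k = 2 ->
  \sum_k a k * w k <= a k0 + a k1.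
Proof.
move=> le_k0 le_k1 w01 w_sum; have /andP [w0_ge0 w0_le1] := w01 k0.
have rest : \sum_(k | k != k0) a k * w k <= a k1 * (2 - w k0).
  rewrite -w_sum [\sum_k w k](bigD1 k0) //= addrC addrK mulr_sumr; apply: ler_sum => k kk0.
  by rewrite mulrC [_ * w k]mulrC ler_wpM2l ?le_k1 //; case/andP: (w01 k).
rewrite (bigD1 k0) //=; apply: le_trans (lerD (lexx _) rest) _.
rewrite -subr_ge0 (_ : _ - _ = (a k0 - a k1) * (1 - w k0)); last by ring.
by rewrite mulr_ge0 // subr_ge0 // le_k0.
Qed.

Lemma char_poly_conj (R : comUnitRingType) n (P A : 'M[R]_n) : P \in unitmx ->
  char_poly (invmx P *m A *m P) = char_poly A.
Proof.
move=> Pu; rewrite /char_poly /char_poly_mx.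
set Q := map_mx polyC (invmx P); set P' := map_mx polyC P.
have QP : Q *m P' = 1%:M by rewrite -map_mxM mulVmx // map_mx1.
have -> : 'X%:M - map_mx polyC (invmx P *m A *m P) =
          Q *m ('X%:M - map_mx polyC A) *m P'.
  by rewrite !map_mxM mulmxBr mulmxBl -/Q -/P' scalar_mxC -[_ *m Q *m P']mulmxA QP mulmx1.
by rewrite !det_mulmx mulrAC -det_mulmx QP det1 mul1r.
Qed.

Lemma eigenvalueZ (F : fieldType) n (A : 'M[F]_n) a x :
  eigenvalue A x -> eigenvalue (a *: A) (a * x).
Proof.
move=> /eigenvalueP [v Av v0]; apply/eigenvalueP; exists v => //.
by rewrite -scalemxAr Av scalerA mulrC.
Qed.

Lemma eigenvalue_trig (F : fieldType) n (T : 'M[F]_n) k :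
  is_trig_mx T -> eigenvalue T (T k k).
Proof.
move=> Tt; rewrite eigenvalue_root_char char_poly_trig // rootE horner_prod.
by rewrite (bigD1 k) //= hornerXsubC subrr mul0r.
Qed.

Section FrobeniusNorm.
Variable C : numClosedFieldType.

Definition mxfrob2 m n (Z : 'M[C]_(m, n)) : C := \tr (Z^t* *m Z).

Definition mxfrob2_cross m n (U V : 'M[C]_(m, n)) : C :=
  \tr (U^t* *m V) + \tr (V^t* *m U).

Lemma trmxC_mul m n p (A : 'M[C]_(m, n)) (B : 'M[C]_(n, p)) :
  (A *m B)^t* = B^t* *m A^t*.
Proof. by rewrite trmx_mul map_mxM. Qed.

Lemma mxtrace_trmxC n (A : 'M[C]_n) : \tr (A^t*) = (\tr A)^*.
Proof. by rewrite trace_map_mx mxtrace_tr. Qed.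

Lemma mulmx_trmxC_diag m n (Z : 'M[C]_(m, n)) k :
  (Z^t* *m Z) k k = \sum_i `|Z i k| ^+ 2.
Proof. by rewrite mxE; apply: eq_bigr => i _; rewrite !mxE normCKC. Qed.

Lemma mxfrob2E m n (Z : 'M[C]_(m, n)) : mxfrob2 Z = \sum_k \sum_i `|Z i k| ^+ 2.
Proof. by apply: eq_bigr => k _; rewrite mulmx_trmxC_diag. Qed.

Lemma mxfrob2_ge0 m n (Z : 'M[C]_(m, n)) : 0 <= mxfrob2 Z.
Proof. by rewrite mxfrob2E; do 2!apply: sumr_ge0 => ? _; rewrite exprn_ge0. Qed.

Lemma mxfrob2_real m n (Z : 'M[C]_(m, n)) : mxfrob2 Z \is Num.real.
Proof. exact/ger0_real/mxfrob2_ge0. Qed.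

Lemma mxfrob2_eq0 m n (Z : 'M[C]_(m, n)) : (mxfrob2 Z == 0) = (Z == 0).
Proof.
apply/eqP/eqP => [|->]; last by rewrite /mxfrob2 mulmx0 mxtrace0.
have sqr_ge0 (x : C) : 0 <= `|x| ^+ 2 by rewrite exprn_ge0.
rewrite mxfrob2E => /psumr_eq0P Z0; apply/matrixP => i k; rewrite mxE.
have /psumr_eq0P Zk := Z0 (fun k _ => sumr_ge0 _ (fun i _ => sqr_ge0 _)) k isT.
by have /eqP := Zk (fun i _ => sqr_ge0 _) i isT; rewrite sqrf_eq0 normr_eq0 => /eqP.
Qed.

Lemma mxfrob2Z m n a (Z : 'M[C]_(m, n)) : mxfrob2 (a *: Z) = `|a| ^+ 2 * mxfrob2 Z.
Proof.
rewrite /mxfrob2; have -> : (a *: Z)^t* = a^* *: Z^t*.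
  by apply/matrixP => i j; rewrite !mxE rmorphM.
by rewrite -scalemxAl -scalemxAr !mxtraceZ mulrA normCKC.
Qed.

Lemma mxfrob2_cross_real m n (U V : 'M[C]_(m, n)) : mxfrob2_cross U V \is Num.real.
Proof.
rewrite /mxfrob2_cross; have -> : V^t* *m U = (U^t* *m V)^t*.
  by rewrite trmxC_mul trmxCK.
by rewrite mxtrace_trmxC CrealE rmorphD /= conjCK addrC.
Qed.

Lemma mxfrob2_addZ m n (U V : 'M[C]_(m, n)) e : e \is Num.real ->
  mxfrob2 (U + e *: V) = mxfrob2 U + e * mxfrob2_cross U V + e ^+ 2 * mxfrob2 V.
Proof.
move=> /CrealP e_real; rewrite /mxfrob2 /mxfrob2_cross.
have -> : (U + e *: V)^t* = U^t* + e *: V^t*.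
  by apply/matrixP => i j; rewrite !mxE rmorphD rmorphM; congr (_ + _ * _).
rewrite mulmxDl !mulmxDr -!scalemxAl -!scalemxAr scalerA.
by rewrite !mxtraceD !mxtraceZ; ring.
Qed.

Lemma unitarymx_mxfrob2 m n (Y : 'M[C]_(m, n)) : Y \is unitarymx -> mxfrob2 Y = m%:R.
Proof. by move=> /unitarymxP Yu; rewrite /mxfrob2 mxtrace_mulC Yu mxtrace1. Qed.

Lemma unitarymx_col_norm_le1 m n (Y : 'M[C]_(m, n)) k :
  Y \is unitarymx -> \sum_i `|Y i k| ^+ 2 <= 1.
Proof.
move=> Yu; rewrite -mulmx_trmxC_diag; set Pi := Y^t* *m Y.
have w_ge0 : 0 <= Pi k k by rewrite mulmx_trmxC_diag sumr_ge0 // => i _; rewrite exprn_ge0.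
have Pi_idem : Pi^t* *m Pi = Pi by rewrite trmxC_mul trmxCK !mulmxA mulmxtVK.
have : Pi k k ^+ 2 <= Pi k k.
  rewrite -{2}Pi_idem [X in _ <= X]mulmx_trmxC_diag (bigD1 k) //= (ger0_norm w_ge0) lerDl.
  by rewrite sumr_ge0 // => i _; rewrite exprn_ge0.
rewrite le_eqVlt in w_ge0; case/predU1P: w_ge0 => [<- _|w_gt0]; first exact: ler01.
by rewrite expr2 -[X in _ <= X -> _]mulr1 ler_pM2l.
Qed.

End FrobeniusNorm.

Section Spectral.
Variable C : numClosedFieldType.

Lemma normalmx_spectralE n (M : 'M[C]_n) : M \is normalmx ->
  M = (spectralmx M)^t* *m diag_mx (spectral_diag M) *m spectralmx M.
Proof.
by move=> /orthomx_spectralP {1}->; rewrite invmx_unitary // spectral_unitarymx.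
Qed.

Lemma char_poly_normalmx n (M : 'M[C]_n) : M \is normalmx ->
  char_poly M = \prod_k ('X - (spectral_diag M 0 k)%:P).
Proof.
move=> /orthomx_spectralP {1}->; rewrite char_poly_conj ?spectral_unit //.
by rewrite char_poly_trig ?diag_mx_is_trig //; apply: eq_bigr => k _; rewrite mxE eqxx.
Qed.

Lemma eigenvalue_unitary_conj n (P T : 'M[C]_n) a : P \is unitarymx ->
  eigenvalue T a -> eigenvalue (P^t* *m T *m P) a.
Proof.
move=> Pu /eigenvalueP [v Tv v0]; apply/eigenvalueP; exists (v *m P).
  by rewrite !mulmxA mulmxtVK // Tv scalemxAl.
by apply: contraNneq v0 => vP0; rewrite -[v](mulmxtVK _ Pu) vP0 mul0mx.
Qed.

Lemma perturb_simple_spectrum n (A : 'M[C]_n.+1) :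
  exists2 E : 'M[C]_n.+1, \tr E = 0 &
  exists2 delta, 0 < delta & forall e, 0 < e < delta ->
    exists t : 'I_n.+1 -> C, injective t /\ forall k, eigenvalue (A + e *: E) (t k).
Proof.
pose mu : C := (\sum_(k < n.+1) k%:R) / n.+1%:R; pose c (k : 'I_n.+1) := k%:R - mu.
have c_inj : injective c by move=> j k /addIr /eqP; rewrite eqr_nat => /eqP /val_inj.
have [P Pu] := Schur A isT; rewrite /similar_to conjymx // => T_trig.
set T := P *m A *m P^t* in T_trig; set D := diag_mx (\row_k c k).
have D_diag k : D k k = c k by rewrite !mxE eqxx.
exists (P^t* *m D *m P).
  rewrite mxtrace_mulC mulmxA (unitarymxP Pu) mul1mx /mxtrace (eq_bigr c) => [|k _].
    by rewrite sumrB sumr_const card_ord -mulr_natr divfK ?pnatr_eq0 ?subrr.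
  exact: D_diag.
have [delta delta_gt0 t_inj] := injective_perturb (fun k => T k k) c_inj.
exists delta => // e e_delta; exists (fun k => T k k + e * c k); split; first exact: t_inj.
have PtP : P^t* *m P = 1%:M by rewrite -[P^t*]mul1mx mulmxKtV.
have -> : A + e *: (P^t* *m D *m P) = P^t* *m (T + e *: D) *m P.
  by rewrite mulmxDr mulmxDl -scalemxAr -scalemxAl /T !mulmxA PtP mul1mx mulmxKtV.
have Te_trig : is_trig_mx (T + e *: D).
  apply/is_trig_mxP => i j ij; have /is_trig_mxP/(_ i j ij) T0 := T_trig.
  have D0 : D i j = 0 by rewrite mxE -val_eqE /= ltn_eqF // mulr0n.
  by rewrite mxE T0 add0r mxE D0 mulr0.
move=> k; have := eigenvalue_unitary_conj Pu (eigenvalue_trig k Te_trig).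
by rewrite mxE [(e *: D) k k]mxE D_diag.
Qed.

Section Gram.
Variables (n : nat) (X : 'M[C]_n).
Local Notation M := (X^t* *m X).

Lemma gram_normal : M \is normalmx.
Proof. by apply/normalmxP; rewrite trmxC_mul trmxCK. Qed.

Lemma gram_spectral_diag_ge0 k : 0 <= spectral_diag M 0 k.
Proof.
have decomp := normalmx_spectralE gram_normal; have Pu := spectral_unitarymx M.
set P := spectralmx M in decomp Pu *; set d := spectral_diag M in decomp *.
have -> : d 0 k = ((X *m P^t*)^t* *m (X *m P^t*)) k k.
  rewrite trmxC_mul trmxCK mulmxA -(mulmxA P) decomp !mulmxA (unitarymxP Pu).
  by rewrite mul1mx mulmxtVK // mxE eqxx.
by rewrite mulmx_trmxC_diag sumr_ge0 // => i _; rewrite exprn_ge0.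
Qed.

Lemma mxfrob2_mul_trmxC m (W : 'M[C]_(m, n)) :
  mxfrob2 (X *m W^t*) =
  \sum_k spectral_diag M 0 k * \sum_i `|(W *m (spectralmx M)^t*) i k| ^+ 2.
Proof.
have decomp := normalmx_spectralE gram_normal.
set P := spectralmx M in decomp *; set d := spectral_diag M in decomp *.
set Y := W *m P^t*.
rewrite /mxfrob2 trmxC_mul trmxCK mulmxA -(mulmxA W) decomp !mulmxA.
have -> : Y *m diag_mx d *m P *m W^t* = Y *m diag_mx d *m Y^t*.
  by rewrite trmxC_mul trmxCK !mulmxA.
rewrite mxtrace_mulC mulmxA mul_mx_diag; apply: eq_bigr => k _.
by rewrite mxE mulmx_trmxC_diag mulrC.
Qed.

End Gram.
End Spectral.

Section SingularValues.
Variable R : realType.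
Local Notation C := R[i].

Lemma adjmxE m n (A : 'M[C]_(m, n)) : adjmx A = A^t*.
Proof. by rewrite /adjmx map_trmx. Qed.

Lemma frob2E n (A : 'M[C]_n) : frob2 A = mxfrob2 A.
Proof. by rewrite /frob2 adjmxE. Qed.

Lemma toCE (x : R) : toC x = (x%:C)%C.
Proof. by []. Qed.

Variables (n : nat) (X : 'M[C]_n).
Local Notation P := (spectralmx (X^t* *m X)).
Local Notation d := (spectral_diag (X^t* *m X)).

Lemma singular_values_exist : exists s, singular_values X s.
Proof.
pose s := [seq Num.sqrt (complex.Re (d 0 k)) | k <- enum 'I_n].
have ge_total : total (>=%R : rel R) by move=> x y; rewrite orbC le_total.
exists (sort >=%R s); split.
- by rewrite size_sort size_map size_enum_ord.
- exact: sort_sorted.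
- by rewrite all_sort; apply/allP => x /mapP [k _ ->]; rewrite sqrtr_ge0.
rewrite adjmxE char_poly_normalmx ?gram_normal //.
rewrite (perm_big _ (permEl (perm_sort _ _))) /= big_map enumT.
apply: eq_bigr => k _; have dk_ge0 := gram_spectral_diag_ge0 X k.
rewrite sqr_sqrtr; last by move: dk_ge0; rewrite lecE => /andP [].
by rewrite toCE RRe_real ?ger0_real.
Qed.

Section KyFan.
Variable s : seq R.
Hypothesis svX : singular_values X s.

Lemma singular_values_sqr_le i j : (i <= j < n)%N -> s`_j ^+ 2 <= s`_i ^+ 2.
Proof.
case: svX => size_s sorted_s s_ge0 _ /andP [ij jn]; have i_lt_n := leq_ltn_trans ij jn.
have ge_trans : transitive (>=%R : rel R) by move=> ? ? ? /= h1 h2; apply: le_trans h2 h1.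
rewrite lerXn2r ?nnegrE ?(allP s_ge0) ?mem_nth ?size_s //.
by apply: (sorted_leq_nth ge_trans (@lexx _ _) 0 sorted_s); rewrite ?inE ?size_s.
Qed.

Lemma singular_values_spectral :
  exists p : 'S_n, forall k, d 0 k = toC (s`_(p k) ^+ 2).
Proof.
case: svX => size_s _ _ char_X.
have size_s2 : size [seq toC (x ^+ 2) | x <- s] == n by rewrite size_map size_s.
have : perm_eq [seq d 0 k | k <- enum 'I_n] (Tuple size_s2).
  apply: prod_XsubC_eq; rewrite big_map enumT -char_poly_normalmx ?gram_normal //.
  by rewrite -adjmxE char_X big_map.
case/tuple_permP => p d_p; exists p => k.
have := congr1 (nth 0 ^~ k) d_p; rewrite (nth_map k) ?size_enum_ord // nth_ord_enum => ->.
by rewrite -(tnth_nth 0) tnth_mktuple (tnth_nth 0) (nth_map 0) ?size_s.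
Qed.

Hypothesis n_gt1 : (1 < n)%N.

Lemma singular_values_top2 : exists k0 k1 : 'I_n,
  [/\ k0 != k1, d 0 k0 = toC (s`_0 ^+ 2), d 0 k1 = toC (s`_1 ^+ 2),
      forall k, d 0 k <= d 0 k0 & forall k, k != k0 -> d 0 k <= d 0 k1].
Proof.
have [p dp] := singular_values_spectral.
pose i0 := Ordinal (ltnW n_gt1); pose i1 := Ordinal n_gt1.
have d_le k (i : 'I_n) : (i <= p k)%N -> d 0 k <= toC (s`_i ^+ 2).
  by move=> ip; rewrite dp !toCE lecR singular_values_sqr_le ?ip /=.
exists ((p^-1)%g i0), ((p^-1)%g i1); rewrite !dp !permKV; split => // [|k|k].
- by rewrite (inj_eq perm_inj).
- exact: d_le.
- by rewrite -(inj_eq (@perm_inj _ p)) permKV -val_eqE -lt0n; apply: (d_le k i1).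
Qed.

Lemma ky_fan_le (W : 'M[C]_(2, n)) : W \is unitarymx ->
  mxfrob2 (X *m W^t*) <= toC (s`_0 ^+ 2 + s`_1 ^+ 2).
Proof.
move=> Wu; have [k0 [k1 [_ dk0 dk1 le_k0 le_k1]]] := singular_values_top2.
have Yu : W *m P^t* \is unitarymx.
  by rewrite mul_unitarymx ?trmxC_unitary ?spectral_unitarymx.
rewrite mxfrob2_mul_trmxC toCE rmorphD /= -!toCE -dk0 -dk1.
apply: sum_mul_le_top2 => // [k|]; last by rewrite -mxfrob2E unitarymx_mxfrob2.
by rewrite sumr_ge0 ?unitarymx_col_norm_le1 // => i _; rewrite exprn_ge0.
Qed.

Lemma ky_fan_attained : exists2 W : 'M[C]_(2, n), W \is unitarymx &
  mxfrob2 (X *m W^t*) = toC (s`_0 ^+ 2 + s`_1 ^+ 2).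
Proof.
have [k0 [k1 [k01 dk0 dk1 _ _]]] := singular_values_top2.
pose kk (i : 'I_2) := if i == ord0 then k0 else k1.
have kk_inj : injective kk.
  move=> [[|[|//]] ?] [[|[|//]] ?]; rewrite /kk /= => kk_eq; apply/val_inj => //=.
  1,2: by move: k01; rewrite kk_eq eqxx.
pose S := rowsub kk (1%:M : 'M[C]_n).
have Su : S \is unitarymx.
  apply/unitarymxP/matrixP => i j; rewrite !mxE (bigD1 (kk i)) //= big1.
    by rewrite /S !mxE eqxx conjC_nat mul1r addr0 (inj_eq kk_inj) eq_sym.
  by move=> k /negbTE k_kk; rewrite /S !mxE eq_sym k_kk mul0r.
exists (S *m P); first by rewrite mul_unitarymx ?spectral_unitarymx.
rewrite mxfrob2_mul_trmxC mulmxtVK ?spectral_unitarymx //.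
rewrite toCE rmorphD /= -!toCE -dk0 -dk1.
have pick_kk i : \sum_k (kk i == k)%:R * d 0 k = d 0 (kk i).
  rewrite (bigD1 (kk i)) //= eqxx mul1r big1 ?addr0 // => k.
  by rewrite eq_sym => /negbTE ->; rewrite mul0r.
have sqr_bool (b : bool) : (b%:R : C) ^+ 2 = b%:R by case: b; rewrite ?expr1n ?expr0n.
rewrite (eq_bigr (fun k => \sum_(i < 2) (kk i == k)%:R * d 0 k)) => [|k _].
  by rewrite exchange_big big_ord_recr big_ord1 /= !pick_kk.
rewrite mulr_sumr; apply: eq_bigr => i _.
by rewrite /S !mxE normr_nat sqr_bool mulrC.
Qed.

End KyFan.
End SingularValues.

Section KyFanGap.
Variable R : realType.
Local Notation C := R[i].

Definition ky_fan_gap (W : 'M[C]_(2, 4 * 4)) (A B : 'M[C]_4) : C :=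
  2 * (mxfrob2 A + mxfrob2 B) - mxfrob2 (Xmat A B *m W^t*).

Lemma XmatD (A B A' B' : 'M[C]_4) : Xmat (A + A') (B + B') = Xmat A B + Xmat A' B'.
Proof. by apply/matrixP => i j; rewrite !mxE; ring. Qed.

Lemma XmatZ a (A B : 'M[C]_4) : Xmat (a *: A) (a *: B) = a *: Xmat A B.
Proof. by apply/matrixP => i j; rewrite !mxE; ring. Qed.

Variable W : 'M[C]_(2, 4 * 4).

Lemma ky_fan_gap_real A B : ky_fan_gap W A B \is Num.real.
Proof. by rewrite rpredB ?rpredM ?realn ?mxfrob2_real // rpredD ?mxfrob2_real. Qed.

Lemma ky_fan_gapZ a A B : ky_fan_gap W (a *: A) (a *: B) = `|a| ^+ 2 * ky_fan_gap W A B.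
Proof. by rewrite /ky_fan_gap XmatZ -scalemxAl !mxfrob2Z; ring. Qed.

Lemma ky_fan_gap_addZ A B A' B' : exists b c,
  [/\ b \is Num.real, c \is Num.real & forall e, e \is Num.real ->
    ky_fan_gap W (A + e *: A') (B + e *: B') = ky_fan_gap W A B + e * b + e ^+ 2 * c].
Proof.
set U := Xmat A B *m W^t*; set V := Xmat A' B' *m W^t*.
exists (2 * (mxfrob2_cross A A' + mxfrob2_cross B B') - mxfrob2_cross U V),
       (2 * (mxfrob2 A' + mxfrob2 B') - mxfrob2 V); split.
- by rewrite rpredB ?rpredM ?realn ?mxfrob2_cross_real // rpredD ?mxfrob2_cross_real.
- by rewrite rpredB ?rpredM ?realn ?mxfrob2_real // rpredD ?mxfrob2_real.
move=> e e_real; rewrite /ky_fan_gap XmatD XmatZ mulmxDl -scalemxAl !mxfrob2_addZ //.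
by ring.
Qed.

End KyFanGap.

Section Reduction.
Variable R : realType.
Local Notation C := R[i].

Lemma distinct_eigs4Z a (A : 'M[C]_4) :
  a != 0 -> distinct_eigs4 A -> distinct_eigs4 (a *: A).
Proof.
move=> a_neq0 [e [e_inj eigA]]; exists (fun k => a * e k); split.
  by move=> j k /(mulfI a_neq0) /e_inj.
by move=> k; apply/eigenvalueZ/eigA.
Qed.

Lemma phi_le_half_iff (A B : 'M[C]_4) : inX A B ->
  phi_le A B (1 / 2) <-> forall W, W \is unitarymx -> 0 <= ky_fan_gap W A B.
Proof.
case=> _ [_ norm_AB]; rewrite !frob2E in norm_AB.
have half : 2 * (mxfrob2 A + mxfrob2 B) = toC (1 / 2).
  by rewrite norm_AB toCE fmorph_div rmorph1 rmorph_nat; field.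
split => [le_half W Wu | gap_ge0 s svX].
  have [s svX] := singular_values_exist (Xmat A B).
  rewrite subr_ge0 half; apply: le_trans (ky_fan_le svX isT Wu) _.
  by rewrite !toCE lecR le_half.
have [W Wu kfW] := ky_fan_attained svX isT.
by have := gap_ge0 W Wu; rewrite subr_ge0 half kfW !toCE lecR.
Qed.

Lemma ky_fan_gap_ge0_simple
    (hY : forall A B : 'M[C]_4, inY A B -> phi_le A B (1 / 2))
    W (A B : 'M[C]_4) : W \is unitarymx -> \tr A = 0 -> \tr B = 0 ->
  distinct_eigs4 A -> distinct_eigs4 B -> 0 <= ky_fan_gap W A B.
Proof.
move=> Wu trA trB simpleA simpleB; set N := mxfrob2 A + mxfrob2 B.
have [N0|N_neq0] := eqVneq N 0.
  move/eqP: N0; rewrite paddr_eq0 ?mxfrob2_ge0 // !mxfrob2_eq0 => /andP [/eqP-> /eqP->].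
  by have := ky_fan_gapZ W 0 0 0; rewrite scale0r normr0 expr0n mul0r => ->.
have N_gt0 : 0 < N by rewrite lt_def N_neq0 addr_ge0 ?mxfrob2_ge0.
pose a := sqrtC (4 * N)^-1.
have a2 : `|a| ^+ 2 = (4 * N)^-1.
  by rewrite ger0_norm ?sqrtC_ge0 ?invr_ge0 ?mulr_ge0 ?ltW // sqrtCK.
have a_neq0 : a != 0 by rewrite -normr_eq0 -sqrf_eq0 a2 invr_eq0 mulf_neq0 ?pnatr_eq0.
have aXY : inY (a *: A) (a *: B).
  split; last by split; apply: distinct_eigs4Z.
  split; first by rewrite mxtraceZ trA mulr0.
  split; first by rewrite mxtraceZ trB mulr0.
  by rewrite !frob2E !mxfrob2Z -mulrDr a2 -/N; field.
have := (phi_le_half_iff (proj1 aXY)).1 (hY _ _ aXY) W Wu.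
by rewrite ky_fan_gapZ a2 pmulr_rge0 // invr_gt0 mulr_gt0.
Qed.

End Reduction.

Theorem theorem3 (R : realType) :
  (forall A B : 'M[R[i]]_4, inX A B -> phi_le A B (1 / 2)) <->
  (forall A B : 'M[R[i]]_4, inY A B -> phi_le A B (1 / 2)).
Proof.
split => [hX A B [ABX _]|hY A B ABX]; first exact: hX.
apply/(phi_le_half_iff ABX) => W Wu; case: ABX => trA [trB _].
have [EA trEA [dA dA_gt0 simpleA]] := perturb_simple_spectrum A.
have [EB trEB [dB dB_gt0 simpleB]] := perturb_simple_spectrum B.
have [delta delta_gt0 lt_delta] :
    exists2 delta, 0 < delta & {in [:: dA; dB], forall d, delta < d}.
  by apply: exists_pos_lt => d; rewrite !inE => /orP [] /eqP ->.
have [b [c [b_real c_real gap_addZ]]] := ky_fan_gap_addZ W A B EA EB.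
apply: (quadratic_ge0_near0 (ky_fan_gap_real W A B) b_real c_real delta_gt0).
move=> e /andP [e_gt0 e_delta]; rewrite -gap_addZ ?gtr0_real //.
have e_lt d : d \in [:: dA; dB] -> e < d by move=> /lt_delta; apply: lt_trans.
apply: (ky_fan_gap_ge0_simple hY Wu).
- by rewrite mxtraceD mxtraceZ trA trEA mulr0 addr0.
- by rewrite mxtraceD mxtraceZ trB trEB mulr0 addr0.
- by apply: simpleA; rewrite e_gt0 e_lt ?mem_head.
- by apply: simpleB; rewrite e_gt0 e_lt // !inE eqxx orbT.
Qed.
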